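(* Let $R$ be any BST on $[n]$ (the reference tree). Assign to every BST $T$ on $[n]$ the potential $\phi_R(T)=\sum_{i=1}^n\bigl(-2\min_{j\in T(i)} d_R(j)\bigr)$, where $T(i)$ is the set of keys in the subtree of $T$ rooted at $i$ and $d_R(j)$ is the depth of $j$ in $R$ (root at depth $0$). There is an absolute constant $c$ such that for every BST $T$ on $[n]$ and every key $i$, if splaying $i$ transforms $T$ into $T'$, then $\mathrm{cost}+\phi_R(T')-\phi_R(T)\le c\,(1+d_R(i))$.
   Context: Splaying a key $i$ (Sleator–Tarjan splay tree) brings $i$ to the root by a sequence of zig-zig and zig-zag steps, each consisting of two rotations, possibly followed by one final zig step consisting of a single rotation. Each zig-zig or zig-zag step costs $2$ and a zig step costs $1$. Here $\mathrm{cost}$ denotes the total cost of the splay of $i$ in $T$, i.e. the number of rotations performed, which equals the depth of $i$ in $T$. *)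

From mathcomp Require Import all_boot all_order all_algebra.
Set Implicit Arguments. Unset Strict Implicit. Unset Printing Implicit Defensive.
Import Order.TTheory GRing.Theory Num.Theory.

Inductive tree : Type := Leaf | Node of tree & nat & tree.

Fixpoint inorder (t : tree) : seq nat :=
  match t with Leaf => [::] | Node l k r => inorder l ++ k :: inorder r end.

Definition is_bst_on (n : nat) (t : tree) : bool := inorder t == iota 1 n.

Fixpoint depth (k : nat) (t : tree) : nat :=
  match t with
  | Leaf => 0
  | Node l x r => if k == x then 0 else if k < x then (depth k l).+1 else (depth k r).+1
  end.

Fixpoint subtree (k : nat) (t : tree) : tree :=
  match t with
  | Leaf => Leaf
  | Node l x r => if k == x then t else if k < x then subtree k l else subtree k r
  end.

Definition seqmin (s : seq nat) : nat :=
  match s with [::] => 0 | x :: s' => foldr minn x s' end.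

Definition minD (R T : tree) (i : nat) : nat :=
  seqmin (map (fun j => depth j R) (inorder (subtree i T))).

Definition phi (n : nat) (R T : tree) : int :=
  (\sum_(1 <= i < n.+1) (- (2 * minD R T i)%:Z))%R.

(* Exact when the key is at even depth. *)
Fixpoint splay_even (a : nat) (t : tree) : tree :=
  match t with
  | Leaf => Leaf
  | Node l b r =>
    if a == b then t else
    if a < b then
      match l with
      | Leaf => t
      | Node ll c lr =>
        if a == c then t else
        if a < c then
          match splay_even a ll with
          | Node A x B => Node A x (Node B c (Node lr b r))
          | Leaf => t
          end
        else
          match splay_even a lr with
          | Node A x B => Node (Node ll c A) x (Node B b r)
          | Leaf => t
          end
      end
    else
      match r with
      | Leaf => t
      | Node rl c rr =>
        if a == c then t else
        if c < a then
          match splay_even a rr with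
          | Node A x B => Node (Node (Node l b rl) c A) x B
          | Leaf => t
          end
        else
          match splay_even a rl with
          | Node A x B => Node (Node l b A) x (Node B c rr)
          | Leaf => t
          end
      end
  end.

(* Sleator–Tarjan (bottom-up) splay of key a: if a is at even depth, only
   double steps are used; if at odd depth, the double steps bring a to a child
   of the root, followed by a final zig at the root. *)
Definition splay (a : nat) (t : tree) : tree :=
  if ~~ odd (depth a t) then splay_even a t else
  match t with
  | Leaf => Leaf
  | Node l b r =>
    if a < b then
      match splay_even a l with
      | Node A x B => Node A x (Node B b r)
      | Leaf => t
      end
    else
      match splay_even a r with
      | Node A x B => Node (Node l b A) x B
      | Leaf => t
      end
  end.

(* cost of splaying a in t = number of rotations = depth of a in t. *)
Definition cost (a : nat) (t : tree) : nat := depth a t.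

From mathcomp Require Import all_boot all_order all_algebra.
From mathcomp Require Import zify.
Import Order.TTheory GRing.Theory Num.Theory.

(* Write M(t) for the minimal R-depth of a key of t, so that phi_R(T) is -2
   times the sum of M over all subtrees of T; M can only decrease from a subtree
   to an enclosing one.  The key fact is that, in a range S of consecutive keys,
   two subranges X < Y cannot both contain a key of minimal R-depth among S: the
   R-ancestor of two such keys lies between them and is shallower.  Applied to
   two of the subtrees rearranged by a zig-zig or zig-zag step, it gives
   cost + (potential change) <= 6 (M(y) - M(x)), where y and x are the subtrees
   rooted at the splayed key before and after the step.  These bounds telescope
   to at most 6 M(T(i)) <= 6 d_R(i), and the final zig costs at most 1 more. *)

Set Implicit Arguments.
Unset Strict Implicit.
Unset Printing Implicit Defensive.

Lemma seqmin_le s x : x \in s -> seqmin s <= x.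
Proof.
case: s => [//|y s]; rewrite /seqmin.
elim: s => [|z s IH]; first by rewrite inE => /eqP ->.
rewrite /= geq_min !inE => /or3P [/eqP xy | /eqP -> | xs].
- by rewrite IH ?orbT // xy mem_head.
- by rewrite leqnn.
- by rewrite IH ?orbT // inE xs orbT.
Qed.

Lemma seqmin_mem s : s != [::] -> seqmin s \in s.
Proof.
case: s => [//|y s] _; rewrite /seqmin.
elim: s => [|z s IH] /=; first exact: mem_head.
rewrite /minn; case: ltnP => _; first by rewrite !inE eqxx orbT.
by move: IH; rewrite !inE => /orP [-> | ->]; rewrite ?orbT.
Qed.

Definition mindepth (R : tree) (s : seq nat) : nat := seqmin [seq depth j R | j <- s].

Definition tmindepth (R : tree) (t : tree) : nat := mindepth R (inorder t).
Arguments tmindepth : simpl never.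

Fixpoint potential (R t : tree) : nat :=
  if t is Node l _ r then tmindepth R t + potential R l + potential R r else 0.

Lemma mindepth_le R s j : j \in s -> mindepth R s <= depth j R.
Proof. by move=> js; apply/seqmin_le/map_f. Qed.

Lemma mindepth_attained R s : s != [::] -> exists2 j, j \in s & depth j R = mindepth R s.
Proof.
move=> s0; have /mapP [j js ->] : mindepth R s \in [seq depth j R | j <- s].
  by apply: seqmin_mem; rewrite -size_eq0 size_map size_eq0.
by exists j.
Qed.

Lemma mindepth_sub R s1 s2 : s1 != [::] -> {subset s1 <= s2} -> mindepth R s2 <= mindepth R s1.
Proof.
by move=> /(mindepth_attained R) [j js <-] sub; apply/mindepth_le/sub.
Qed.

Lemma inorder_Node_neq_nil l k r : inorder (Node l k r) != [::].
Proof. by rewrite /=; case: (inorder l). Qed.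

Lemma tmindepth_left R l k r : inorder l != [::] -> tmindepth R (Node l k r) <= tmindepth R l.
Proof. by move=> l0; apply: mindepth_sub => // x xl; rewrite /= mem_cat xl. Qed.

Lemma tmindepth_right R l k r : inorder r != [::] -> tmindepth R (Node l k r) <= tmindepth R r.
Proof. by move=> r0; apply: mindepth_sub => // x xr; rewrite /= mem_cat inE xr !orbT. Qed.

Lemma pairwise_cat_rel (T : eqType) (r : rel T) p q x y :
  pairwise r (p ++ q) -> x \in p -> y \in q -> r x y.
Proof. by rewrite pairwise_cat => /and3P [/allrelP rpq _ _]; apply: rpq. Qed.

Definition contiguous (s : seq nat) : Prop :=
  forall j k u, j \in s -> k \in s -> j <= u <= k -> u \in s.

Lemma contiguous_catl p q : pairwise ltn (p ++ q) -> contiguous (p ++ q) -> contiguous p.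
Proof.
move=> pq c j k u jp kp ju; have := c j k u; rewrite !mem_cat jp kp => /(_ isT isT ju).
case/orP=> // uq; have := pairwise_cat_rel pq kp uq; lia.
Qed.

Lemma contiguous_catr p q : pairwise ltn (p ++ q) -> contiguous (p ++ q) -> contiguous q.
Proof.
move=> pq c j k u jq kq ju; have := c j k u; rewrite !mem_cat jq kq !orbT => /(_ isT isT ju).
case/orP=> // up; have := pairwise_cat_rel pq up jq; lia.
Qed.

(* Satisfied by the key set of every subtree of a BST on the keys of [R]. *)
Definition key_range (R : tree) (s : seq nat) : Prop :=
  [/\ pairwise ltn s, contiguous s & {subset s <= inorder R}].

Lemma key_range_catl R p q : key_range R (p ++ q) -> key_range R p.
Proof.
case=> pq c sub; split; first by move: pq; rewrite pairwise_cat => /and3P [].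
- exact: contiguous_catl c.
- by move=> x xp; apply: sub; rewrite mem_cat xp.
Qed.

Lemma key_range_catr R p q : key_range R (p ++ q) -> key_range R q.
Proof.
case=> pq c sub; split; first by move: pq; rewrite pairwise_cat => /and3P [].
- exact: contiguous_catr c.
- by move=> x xq; apply: sub; rewrite mem_cat xq orbT.
Qed.

Lemma key_range_left R l k r : key_range R (inorder (Node l k r)) -> key_range R (inorder l).
Proof. exact: key_range_catl. Qed.

Lemma key_range_right R l k r : key_range R (inorder (Node l k r)) -> key_range R (inorder r).
Proof. by move/key_range_catr/(@key_range_catr R [:: k]). Qed.

Lemma depth_Node_l a l b r : a < b -> depth a (Node l b r) = (depth a l).+1.
Proof. by move=> ab; rewrite /= ltn_eqF // ab. Qed.

Lemma depth_Node_r a l b r : b < a -> depth a (Node l b r) = (depth a r).+1.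
Proof. by move=> ba; rewrite /= gtn_eqF // ltnNge ltnW. Qed.

Lemma pairwise_inorder_Node l b r : pairwise ltn (inorder (Node l b r)) ->
  [/\ {in inorder l, forall j, j < b}, {in inorder r, forall k, b < k},
      pairwise ltn (inorder l) & pairwise ltn (inorder r)].
Proof.
move=> lbr; have /= := lbr; rewrite pairwise_cat pairwise_cons => /and3P [_ -> /andP [/allP br ->]].
by split=> // j jl; apply: pairwise_cat_rel lbr jl (mem_head b _).
Qed.

Lemma mem_inorder_l a l b r : pairwise ltn (inorder (Node l b r)) ->
  a \in inorder (Node l b r) -> a < b -> a \in inorder l.
Proof.
case/pairwise_inorder_Node=> _ br _ _; rewrite /= mem_cat inE => /or3P [// | /eqP -> | ar].
  by rewrite ltnn.
by have := br a ar; lia.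
Qed.

Lemma mem_inorder_r a l b r : pairwise ltn (inorder (Node l b r)) ->
  a \in inorder (Node l b r) -> b < a -> a \in inorder r.
Proof.
case/pairwise_inorder_Node=> lb _ _ _; rewrite /= mem_cat inE => /or3P [al | /eqP -> | //].
  by have := lb a al; lia.
by rewrite ltnn.
Qed.

Lemma shallow_key_between R j k : pairwise ltn (inorder R) ->
  j \in inorder R -> k \in inorder R -> j < k ->
  exists2 u, j <= u <= k & depth u R < maxn (depth j R) (depth k R).
Proof.
elim: R j k => [//|l IHl x r IHr] j k sR jR kR jk.
have [_ _ sl sr] := pairwise_inorder_Node sR.
case: (ltnP k x) => [kx | xk].
  have jx : j < x by lia.
  have [u ju uR] := IHl j k sl (mem_inorder_l sR jR jx) (mem_inorder_l sR kR kx) jk.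
  by exists u => //; rewrite !depth_Node_l ?maxnSS //; lia.
case: (ltnP x j) => [xj | jx].
  have xk' : x < k by lia.
  have [u ju uR] := IHr j k sr (mem_inorder_r sR jR xj) (mem_inorder_r sR kR xk') jk.
  by exists u => //; rewrite !depth_Node_r ?maxnSS //; lia.
exists x; first lia.
rewrite [depth x _]/= eqxx leq_max; case: (ltnP j x) => [jx' | xj]; first by rewrite depth_Node_l.
by rewrite (depth_Node_r l r (_ : x < k)) ?orbT //; lia.
Qed.

Section Potential.

Variable R : tree.
Hypothesis R_sorted : pairwise ltn (inorder R).

(* [p] and [q] cannot both contain a key of minimal [R]-depth in the range:
   a key between the two would be shallower still. *)
Lemma tmindepth_split t p x q : key_range R (inorder t) -> inorder t = p ++ x :: q ->
  p != [::] -> q != [::] -> 2 * tmindepth R t < mindepth R p + mindepth R q.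
Proof.
move=> + tS p0 q0; rewrite /tmindepth tS; set S := p ++ x :: q => -[sS cS SR].
have pS : {subset p <= S} by move=> y yp; rewrite mem_cat yp.
have qS : {subset q <= S} by move=> y yq; rewrite mem_cat inE yq !orbT.
have mp := mindepth_sub R p0 pS; have mq := mindepth_sub R q0 qS.
rewrite ltnNge; apply/negP => le.
have [j jp dj] := mindepth_attained R p0; have [k kq dk] := mindepth_attained R q0.
have jk : j < k by apply: pairwise_cat_rel sS jp (_ : k \in x :: q); rewrite inE kq orbT.
have [u ju du] := shallow_key_between R_sorted (SR _ (pS _ jp)) (SR _ (qS _ kq)) jk.
have := mindepth_le R (cS j k u (pS _ jp) (qS _ kq) ju); lia.
Qed.

(* The term [6 * tmindepth R t] makes the bound telescope over the double
   rotations; at the bottom, [tmindepth] of the subtree rooted at [a] is at most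
   [depth a R]. *)
Definition even_splay_bound (a : nat) (t t' : tree) : Prop :=
  inorder t' = inorder t /\
  depth a t + 2 * potential R t + 6 * tmindepth R t <= 6 * depth a R + 2 * potential R t'.

Lemma root_splay_bound l a r : even_splay_bound a (Node l a r) (Node l a r).
Proof.
have : tmindepth R (Node l a r) <= depth a R.
  by apply: mindepth_le; rewrite /= mem_cat mem_head orbT.
split=> //; rewrite [depth a _]/= eqxx; lia.
Qed.

Lemma zigzig_left_bound a ll c lr b r A B : a < c -> a < b ->
  key_range R (inorder (Node (Node ll c lr) b r)) -> a \in inorder ll ->
  even_splay_bound a ll (Node A a B) ->
  even_splay_bound a (Node (Node ll c lr) b r) (Node A a (Node B c (Node lr b r))).
Proof.
move=> ac ab kr al [keys IH].
have keys' : inorder (Node A a (Node B c (Node lr b r))) = inorder (Node (Node ll c lr) b r).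
  by rewrite /= -keys /= -!catA.
split=> //; rewrite !depth_Node_l //.
have l0 : inorder ll != [::] by case: (inorder ll) al.
have eAB : tmindepth R (Node A a B) = tmindepth R ll by rewrite /tmindepth keys.
have eo : tmindepth R (Node A a (Node B c (Node lr b r))) = tmindepth R (Node (Node ll c lr) b r).
  by rewrite /tmindepth keys'.
have le_root := tmindepth_left R b r (inorder_Node_neq_nil ll c lr).
have le_child := tmindepth_left R c lr l0.
have le_new_child := tmindepth_right R A a (inorder_Node_neq_nil B c (Node lr b r)).
have le_new_grandchild := tmindepth_right R B c (inorder_Node_neq_nil lr b r).
have sep : 2 * tmindepth R (Node (Node ll c lr) b r) < tmindepth R ll + tmindepth R (Node lr b r).
  by apply: (tmindepth_split kr (x := c)); rewrite ?inorder_Node_neq_nil // /= -catA.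
move: IH; rewrite /= eAB; lia.
Qed.

Lemma zigzag_left_bound a ll c lr b r A B : c < a -> a < b ->
  key_range R (inorder (Node (Node ll c lr) b r)) -> a \in inorder lr ->
  even_splay_bound a lr (Node A a B) ->
  even_splay_bound a (Node (Node ll c lr) b r) (Node (Node ll c A) a (Node B b r)).
Proof.
move=> ca ab kr al [keys IH].
have keys' : inorder (Node (Node ll c A) a (Node B b r)) = inorder (Node (Node ll c lr) b r).
  by rewrite /= -keys /= -!catA /= -?catA.
split=> //; rewrite depth_Node_l ?depth_Node_r //.
have l0 : inorder lr != [::] by case: (inorder lr) al.
have eAB : tmindepth R (Node A a B) = tmindepth R lr by rewrite /tmindepth keys.
have eo : tmindepth R (Node (Node ll c A) a (Node B b r)) = tmindepth R (Node (Node ll c lr) b r).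
  by rewrite /tmindepth keys'.
have le_root := tmindepth_left R b r (inorder_Node_neq_nil ll c lr).
have le_child := tmindepth_right R ll c l0.
have le_new_left := tmindepth_left R a (Node B b r) (inorder_Node_neq_nil ll c A).
have le_new_right := tmindepth_right R (Node ll c A) a (inorder_Node_neq_nil B b r).
have sep : 2 * tmindepth R (Node (Node ll c lr) b r) <
           tmindepth R (Node ll c A) + tmindepth R (Node B b r).
  by apply: (tmindepth_split kr (x := a)); rewrite ?inorder_Node_neq_nil // -keys'.
move: IH; rewrite /= eAB; lia.
Qed.

Lemma zigzig_right_bound a l b rl c rr A B : b < a -> c < a ->
  key_range R (inorder (Node l b (Node rl c rr))) -> a \in inorder rr ->
  even_splay_bound a rr (Node A a B) ->
  even_splay_bound a (Node l b (Node rl c rr)) (Node (Node (Node l b rl) c A) a B).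
Proof.
move=> ba ca kr ar [keys IH].
have keys' : inorder (Node (Node (Node l b rl) c A) a B) = inorder (Node l b (Node rl c rr)).
  by rewrite /= -keys /= -!catA /= -?catA.
split=> //; rewrite !depth_Node_r //.
have r0 : inorder rr != [::] by case: (inorder rr) ar.
have eAB : tmindepth R (Node A a B) = tmindepth R rr by rewrite /tmindepth keys.
have eo : tmindepth R (Node (Node (Node l b rl) c A) a B) = tmindepth R (Node l b (Node rl c rr)).
  by rewrite /tmindepth keys'.
have le_root := tmindepth_right R l b (inorder_Node_neq_nil rl c rr).
have le_child := tmindepth_right R rl c r0.
have le_new_child := tmindepth_left R a B (inorder_Node_neq_nil (Node l b rl) c A).
have le_new_grandchild := tmindepth_left R c A (inorder_Node_neq_nil l b rl).
have sep : 2 * tmindepth R (Node l b (Node rl c rr)) < tmindepth R (Node l b rl) + tmindepth R rr.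
  by apply: (tmindepth_split kr (x := c)); rewrite ?inorder_Node_neq_nil // /= -catA.
move: IH; rewrite /= eAB; lia.
Qed.

Lemma zigzag_right_bound a l b rl c rr A B : b < a -> a < c ->
  key_range R (inorder (Node l b (Node rl c rr))) -> a \in inorder rl ->
  even_splay_bound a rl (Node A a B) ->
  even_splay_bound a (Node l b (Node rl c rr)) (Node (Node l b A) a (Node B c rr)).
Proof.
move=> ba ac kr ar [keys IH].
have keys' : inorder (Node (Node l b A) a (Node B c rr)) = inorder (Node l b (Node rl c rr)).
  by rewrite /= -keys /= -!catA /= -?catA.
split=> //; rewrite depth_Node_r ?depth_Node_l //.
have r0 : inorder rl != [::] by case: (inorder rl) ar.
have eAB : tmindepth R (Node A a B) = tmindepth R rl by rewrite /tmindepth keys.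
have eo : tmindepth R (Node (Node l b A) a (Node B c rr)) = tmindepth R (Node l b (Node rl c rr)).
  by rewrite /tmindepth keys'.
have le_root := tmindepth_right R l b (inorder_Node_neq_nil rl c rr).
have le_child := tmindepth_left R c rr r0.
have le_new_left := tmindepth_left R a (Node B c rr) (inorder_Node_neq_nil l b A).
have le_new_right := tmindepth_right R (Node l b A) a (inorder_Node_neq_nil B c rr).
have sep : 2 * tmindepth R (Node l b (Node rl c rr)) <
           tmindepth R (Node l b A) + tmindepth R (Node B c rr).
  by apply: (tmindepth_split kr (x := a)); rewrite ?inorder_Node_neq_nil // -keys'.
move: IH; rewrite /= eAB; lia.
Qed.

Lemma splay_even_bound n t a : key_range R (inorder t) -> a \in inorder t -> depth a t = n.*2 ->
  exists A B, splay_even a t = Node A a B /\ even_splay_bound a t (Node A a B).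
Proof.
elim: n t => [|n IH] [//|l b r] kr aT dt.
  have -> : a = b.
    by move: dt => /=; case: eqP => // _; case: ifP.
  by exists l, r; rewrite /= eqxx; split=> //; apply: root_splay_bound.
have [sp _ _] := kr.
case: (ltngtP a b) => [ab | ba | ab]; last by move: dt; rewrite ab /= eqxx.
- case: l kr aT sp dt (mem_inorder_l sp aT ab) => [//|ll c lr] kr _ _ dt al.
  have kl := key_range_left kr; have [sl _ _] := kl.
  case: (ltngtP a c) => [ac | ca | ac]; last by move: dt; rewrite depth_Node_l // ac /= eqxx.
  + have al' := mem_inorder_l sl al ac.
    have [|A [B [e bnd]]] := IH ll (key_range_left kl) al'.
      by move: dt; rewrite !depth_Node_l // doubleS => /succn_inj/succn_inj.
    exists A, (Node B c (Node lr b r)); split; first by rewrite /= ltn_eqF // ab ltn_eqF // ac e.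
    exact: zigzig_left_bound.
  + have al' := mem_inorder_r sl al ca.
    have [|A [B [e bnd]]] := IH lr (key_range_right kl) al'.
      by move: dt; rewrite depth_Node_l // depth_Node_r // doubleS => /succn_inj/succn_inj.
    exists (Node ll c A), (Node B b r).
    split; first by rewrite /= ltn_eqF // ab gtn_eqF // ltnNge (ltnW ca) e.
    exact: zigzag_left_bound.
- case: r kr aT sp dt (mem_inorder_r sp aT ba) => [//|rl c rr] kr _ _ dt ar.
  have kr' := key_range_right kr; have [sr _ _] := kr'.
  have ab : (a < b) = false by rewrite ltnNge ltnW.
  case: (ltngtP a c) => [ac | ca | ac]; last by move: dt; rewrite depth_Node_r // ac /= eqxx.
  + have ar' := mem_inorder_l sr ar ac.
    have [|A [B [e bnd]]] := IH rl (key_range_left kr') ar'.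
      by move: dt; rewrite depth_Node_r // depth_Node_l // doubleS => /succn_inj/succn_inj.
    exists (Node l b A), (Node B c rr).
    split; first by rewrite /= gtn_eqF // ab ltn_eqF // ltnNge (ltnW ac) e.
    exact: zigzag_right_bound.
  + have ar' := mem_inorder_r sr ar ca.
    have [|A [B [e bnd]]] := IH rr (key_range_right kr') ar'.
      by move: dt; rewrite !depth_Node_r // doubleS => /succn_inj/succn_inj.
    exists (Node (Node l b rl) c A), B.
    split; first by rewrite /= gtn_eqF // ab gtn_eqF // ca e.
    exact: zigzig_right_bound.
Qed.

Definition splay_bound (a : nat) (t t' : tree) : Prop :=
  inorder t' = inorder t /\
  depth a t + 2 * potential R t <= 7 * (1 + depth a R) + 2 * potential R t'.

Lemma zig_left_bound a l b r A B : a < b -> even_splay_bound a l (Node A a B) ->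
  splay_bound a (Node l b r) (Node A a (Node B b r)).
Proof.
move=> ab [keys IH]; split; first by rewrite /= -keys -catA.
have eAB : tmindepth R (Node A a B) = tmindepth R l by rewrite /tmindepth keys.
have eo : tmindepth R (Node A a (Node B b r)) = tmindepth R (Node l b r).
  by rewrite /tmindepth /= -keys -catA.
move: IH; rewrite depth_Node_l //= eAB; lia.
Qed.

Lemma zig_right_bound a l b r A B : b < a -> even_splay_bound a r (Node A a B) ->
  splay_bound a (Node l b r) (Node (Node l b A) a B).
Proof.
move=> ba [keys IH]; split; first by rewrite /= -keys -catA.
have eAB : tmindepth R (Node A a B) = tmindepth R r by rewrite /tmindepth keys.
have eo : tmindepth R (Node (Node l b A) a B) = tmindepth R (Node l b r).
  by rewrite /tmindepth /= -keys -catA.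
move: IH; rewrite depth_Node_r //= eAB; lia.
Qed.

Lemma splay_amortized t a :
  key_range R (inorder t) -> a \in inorder t -> splay_bound a t (splay a t).
Proof.
move=> kt aT; rewrite /splay; case: ifP => [even | odd_d].
  have [A [B [-> [keys bnd]]]] := splay_even_bound kt aT (esym (even_halfK even)).
  by split=> //; lia.
case: t kt aT odd_d => [//|l b r] kt aT odd_d; have [st _ _] := kt.
case: (ltngtP a b) => [ab | ba | ab]; last by move: odd_d; rewrite ab /= eqxx.
- move: odd_d; rewrite depth_Node_l // /= => /negbT; rewrite !negbK => even.
  have [A [B [-> bnd]]] :=
    splay_even_bound (key_range_left kt) (mem_inorder_l st aT ab) (esym (even_halfK even)).
  exact: zig_left_bound.
- move: odd_d; rewrite depth_Node_r // /= => /negbT; rewrite !negbK => even.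
  have [A [B [-> bnd]]] :=
    splay_even_bound (key_range_right kt) (mem_inorder_r st aT ba) (esym (even_halfK even)).
  exact: zig_right_bound.
Qed.

End Potential.

Lemma pairwise_ltn_iota m k : pairwise ltn (iota m k).
Proof. by rewrite -sorted_pairwise ?iota_ltn_sorted //; exact: ltn_trans. Qed.

Lemma key_range_bst n R T : is_bst_on n R -> is_bst_on n T -> key_range R (inorder T).
Proof.
move=> /eqP eR /eqP eT; rewrite /key_range eT eR; split=> //; first exact: pairwise_ltn_iota.
by move=> j k u; rewrite !mem_iota; lia.
Qed.

Lemma potential_sum_subtree R t : pairwise ltn (inorder t) ->
  \sum_(i <- inorder t) tmindepth R (subtree i t) = potential R t.
Proof.
elim: t => [|l IHl b r IHr] st; first by rewrite big_nil.
have [lb br sl sr] := pairwise_inorder_Node st.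
rewrite [inorder _]/= big_cat big_cons [subtree b _]/= eqxx.
have -> : \sum_(i <- inorder l) tmindepth R (subtree i (Node l b r)) = potential R l.
  by rewrite -IHl //; apply: eq_big_seq => i /lb ib; rewrite /= ltn_eqF // ib.
have -> : \sum_(i <- inorder r) tmindepth R (subtree i (Node l b r)) = potential R r.
  by rewrite -IHr //; apply: eq_big_seq => i /br bi; rewrite /= gtn_eqF // ltnNge ltnW.
by rewrite /= addnCA addnA.
Qed.

Lemma phi_potential n R T : is_bst_on n T -> phi n R T = (- (2 * potential R T)%:Z)%R.
Proof.
move=> /eqP eT; rewrite /phi -potential_sum_subtree ?eT ?pairwise_ltn_iota //.
rewrite /index_iota subSS subn0 -eT sumrN big_distrr /=.
by rewrite (big_morph Posz PoszD (erefl (0 : int))).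
Qed.

Theorem mainTheorem8 :
  exists c : nat,
    forall (n : nat) (R T : tree) (i : nat),
      is_bst_on n R -> is_bst_on n T -> (1 <= i <= n)%N ->
      ((cost i T)%:Z + phi n R (splay i T) - phi n R T
        <= (c * (1 + depth i R))%:Z)%R.
Proof.
exists 7 => n R T i bR bT iin.
have sR : pairwise ltn (inorder R) by rewrite (eqP bR) pairwise_ltn_iota.
have iT : i \in inorder T by rewrite (eqP bT) mem_iota; lia.
have [keys bound] := splay_amortized sR (key_range_bst bR bT) iT.
have bT' : is_bst_on n (splay i T) by rewrite /is_bst_on keys.
rewrite (phi_potential R bT) (phi_potential R bT') /cost; lia.
Qed.
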